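(* Let $F$ be a graph fibration and let $K,H$ be graphs with $K\in F$ and $H\in F$ such that there is an injective graph homomorphism $\iota\colon H\to K$. Then $\iota(F(H))\subset F(K)$.
   Context: Graphs are finite, undirected, without multiple edges, loops allowed, considered up to isomorphism; $N_k$ is the edgeless graph on $k$ vertices. For a set $V$, $\mathbb{Z}_2^{*V}$ is the group generated by $V$ subject to $v^2=e$; a map $\phi\colon V\to V'$ induces a homomorphism $\mathbb{Z}_2^{*V}\to\mathbb{Z}_2^{*V'}$, also denoted $\phi$. A vertex overlap of graphs $K,H$ is a subset $f\subset V(K)\times V(H)$ in which each vertex occurs at most once; $K\cup_fH$ is the quotient of $K\sqcup H$ identifying $v$ with $w$ for $(v,w)\in f$ (an edge between two vertices of the quotient iff there is one between some representatives); $f_K,f_H$ are the induced maps into $V(K\cup_fH)$. A graph fibration is a set $F$ of pairs $(K,a)$, $K$ a graph, $a\in\mathbb{Z}_2^{*V(K)}$, taken up to $(K,a)\equiv(K',\phi(a))$ for isomorphisms $\phi\colon K\to K'$, with $(N_0,e),(N_1,e)\in F$ and: (F1) each $F(K):=\{a\mid(K,a)\in F\}$ is empty or a normal subgroup of $\mathbb{Z}_2^{*V(K)}$; (F2) $\phi(F(K))=F(K)$ for all automorphisms $\phi$ of $K$; (F3) if $(K,a),(H,b)\in F$ and $f$ is a vertex overlap, then $(K\cup_fH,f_K(a)f_H(b))\in F$. We write $K\in F$ if $F(K)\ne\emptyset$. *)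

From mathcomp Require Import all_boot.
Set Implicit Arguments. Unset Strict Implicit. Unset Printing Implicit Defensive.

(* A finite undirected graph without multiple edges, loops allowed,
   on the vertex set 'I_n.  Every finite graph is isomorphic to one of these. *)
Record graph := Graph {
  gn : nat;
  gadj : rel 'I_gn;
  gsym : symmetric gadj }.

Notation V G := ('I_(gn G)).

Lemma edgeless_sym (k : nat) : symmetric (fun _ _ : 'I_k => false).
Proof. by []. Qed.
Definition edgeless (k : nat) : graph := @Graph k (fun _ _ => false) (@edgeless_sym k).

Definition ghom (H K : graph) (phi : V H -> V K) : Prop :=
  forall x y, gadj x y -> gadj (phi x) (phi y).
Definition giso (K K' : graph) (phi : V K -> V K') : Prop :=
  bijective phi /\ forall x y, gadj (phi x) (phi y) = gadj x y.

(* The group Z_2^{*V}: elements are words over V modulo the relations v v = e.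
   [zreduce] computes the reduced normal form (no two adjacent equal letters).
   Product = concatenation, inverse = reversal, identity = [::],
   the homomorphism induced by phi : V -> V' is [map phi]. *)
Definition zpush (T : eqType) (x : T) (s : seq T) : seq T :=
  if s is y :: s' then (if x == y then s' else x :: s) else [:: x].
Definition zreduce (T : eqType) (w : seq T) : seq T := foldr (@zpush T) [::] w.

(* A candidate fibration: a predicate on pairs (K, a) with a a word over V(K). *)
Definition gpred := forall G : graph, seq (V G) -> Prop.

(* F is a set of group elements: membership only depends on the group element. *)
Definition respects_group (F : gpred) : Prop :=
  forall K (w : seq (V K)), F K w <-> F K (zreduce w).

(* pairs are taken up to (K,a) == (K', phi(a)) for isomorphisms phi *)
Definition iso_invariant (F : gpred) : Prop :=
  forall K K' (phi : V K -> V K'), giso phi ->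
    forall a, F K a <-> F K' (map phi a).

Definition mem_fib (F : gpred) (K : graph) : Prop := exists a, F K a.

Definition F1 (F : gpred) : Prop :=
  forall K, mem_fib F K ->
    [/\ F K [::],
        (forall a b, F K a -> F K b -> F K (a ++ b)),
        (forall a, F K a -> F K (rev a)) &
        (forall g a, F K a -> F K (g ++ a ++ rev g))].

Definition F2 (F : gpred) : Prop :=
  forall K (phi : V K -> V K), giso phi ->
    (forall a, F K a -> F K (map phi a)) /\
    (forall b, F K b -> exists2 a, F K a & zreduce (map phi a) = zreduce b).

Definition overlap (K H : graph) (f : V K -> V H -> bool) : Prop :=
  (forall v w w', f v w -> f v w' -> w = w') /\
  (forall v v' w, f v w -> f v' w -> v = v').

(* G together with fK, fH is (a copy of) the quotient K \cup_f H of K + H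
   identifying v with w for (v,w) in f, with the induced maps fK, fH. *)
Definition is_overlap_union (K H : graph) (f : V K -> V H -> bool)
  (G : graph) (fK : V K -> V G) (fH : V H -> V G) : Prop :=
  [/\ injective fK, injective fH,
      (forall v w, (fK v == fH w) = f v w),
      (forall x, (exists v, fK v = x) \/ (exists w, fH w = x)) &
      (forall x y, gadj x y <->
         (exists v v', [/\ fK v = x, fK v' = y & gadj v v']) \/
         (exists w w', [/\ fH w = x, fH w' = y & gadj w w']))].

Definition F3 (F : gpred) : Prop :=
  forall K H (f : V K -> V H -> bool), overlap f ->
  forall G (fK : V K -> V G) (fH : V H -> V G), is_overlap_union f fK fH ->
  forall a b, F K a -> F H b -> F G (map fK a ++ map fH b).

Definition graph_fibration (F : gpred) : Prop :=
  [/\ respects_group F, iso_invariant F,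
      F (edgeless 0) [::] /\ F (edgeless 1) [::],
      F1 F /\ F2 F & F3 F].

(* Gluing H onto K along the graph of iota adds neither vertices nor edges,
   since iota is an injective homomorphism: the union is K itself, with
   induced maps id and iota.  Applying (F3) to (K, e) and (H, b) then puts
   (K, e * iota(b)) = (K, iota(b)) in F. *)

From mathcomp Require Import all_boot.
Set Implicit Arguments. Unset Strict Implicit. Unset Printing Implicit Defensive.

Section GraphOverlap.

Variables (K H : graph) (iota : V H -> V K).
Hypothesis iota_inj : injective iota.

Definition graph_overlap (v : V K) (w : V H) : bool := v == iota w.

Lemma overlap_graph : overlap graph_overlap.
Proof.
split=> [v w w' /eqP -> /eqP /iota_inj // | v v' w /eqP -> /eqP ->] //.
Qed.

Lemma overlap_union_graph :
  ghom iota -> is_overlap_union graph_overlap id iota.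
Proof.
move=> iota_hom; split=> // [x | x y]; first by left; exists x.
split=> [Exy | [[v [v' [<- <- //]]] | [w [w' [<- <- /iota_hom //]]]]].
by left; exists x, y.
Qed.

End GraphOverlap.

Theorem lemma2p16 (F : gpred) (K H : graph) (iota : V H -> V K) :
  graph_fibration F -> mem_fib F K -> mem_fib F H ->
  injective iota -> ghom iota ->
  forall b, F H b -> F K (map iota b).
Proof.
move=> [_ _ _ [F1F _] F3F] memK _ iota_inj iota_hom b Fb.
have [Fe _ _ _] := F1F K memK.
exact: F3F (overlap_graph iota_inj) _ _ _
  (overlap_union_graph iota_inj iota_hom) _ _ Fe Fb.
Qed.
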